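(* Let $\lambda\in\mathbb C$ and put $(\lambda_i,\beta_i)=\Phi^i(\lambda,0)$ for $i\ge 0$ (so $\lambda_0=\lambda$, $\beta_0=0$). Let $n\ge 0$ and suppose that the weights $(\lambda_0,\beta_0),\dots,(\lambda_n,\beta_n)$ are pairwise distinct, $\beta_i\neq 0$ for $1\le i\le n$, and $\beta_{n+1}=0$. Let $F_{\mathrm{hw}}(\lambda)$ be the $(n+1)$-dimensional $L$-module with basis $v_0,\dots,v_n$ and action $hv_i=\lambda_i v_i$ $(0\le i\le n)$; $dv_0=0$, $dv_i=\beta_i v_{i-1}$ $(1\le i\le n)$; $uv_n=0$, $uv_i=v_{i+1}$ $(0\le i\le n-1)$ (this is a simple $L$-module). Let $J_\lambda=\{f(h,ud)\in L_0: f\in\mathbb C[x,y],\ f(\lambda_i,\beta_i)=0 \text{ for } 0\le i\le n\}$. Then the annihilator of $F_{\mathrm{hw}}(\lambda)$ in $L$ is the two-sided ideal $\langle u^{n+1}, d^{n+1}, J_\lambda\rangle$.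
   Context: Let $r,s,\gamma\in\mathbb C$ with $rs\neq 0$ and $\phi\in\mathbb C[x]$. The generalized down-up algebra $L=L(\phi,r,s,\gamma)$ is the associative $\mathbb C$-algebra generated by $u,d,h$ subject to $hu-ruh=\gamma u$, $dh-rhd=\gamma d$, $du-sud=\phi(h)$; it is a noetherian domain with $\mathbb C$-basis $\{u^ih^jd^k: i,j,k\ge 0\}$. $L$ is $\mathbb Z$-graded by $\deg u=1$, $\deg d=-1$, $\deg h=0$; $L_i$ denotes the degree-$i$ component, and $L_0$ is the polynomial algebra $\mathbb C[h,ud]$ in the commuting elements $h$ and $ud$. $\langle a_1,\dots,a_k\rangle$ denotes the two-sided ideal generated by the listed elements (or sets). The map $\Phi:\mathbb C^2\to\mathbb C^2$ is $\Phi(\lambda,\beta)=(r\lambda+\gamma,\ s\beta+\phi(\lambda))$. *)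

From HB Require Import structures.
From mathcomp Require Import all_boot all_order all_algebra.
Set Implicit Arguments. Unset Strict Implicit. Unset Printing Implicit Defensive.
Import Order.TTheory GRing.Theory Num.Theory.
Local Open Scope ring_scope.

Definition peval (K : fieldType) (A : algType K) (phi : {poly K}) (x : A) : A :=
  \sum_(i < size phi) phi`_i *: x ^+ i.

Definition downup_relations (K : fieldType) (A : algType K)
    (phi : {poly K}) (r s gamma : K) (u d h : A) : Prop :=
  [/\ h * u - r *: (u * h) = gamma *: u,
      d * h - r *: (h * d) = gamma *: d &
      d * u - s *: (u * d) = peval phi h].

Definition pbw_basis (K : fieldType) (A : algType K) (u d h : A) : Prop :=
  (forall a : A, exists (N : nat) (c : nat -> nat -> nat -> K),
      a = \sum_(i < N) \sum_(j < N) \sum_(k < N)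
            c i j k *: (u ^+ i * h ^+ j * d ^+ k)) /\
  (forall (N : nat) (c : nat -> nat -> nat -> K),
      \sum_(i < N) \sum_(j < N) \sum_(k < N)
            c i j k *: (u ^+ i * h ^+ j * d ^+ k) = 0 ->
      forall i j k, (i < N)%N -> (j < N)%N -> (k < N)%N -> c i j k = 0).

(* A is (a presentation of) the generalized down-up algebra L(phi,r,s,gamma):
   generated by u,d,h subject to the relations, with PBW basis. *)
Definition is_downup_algebra (K : fieldType) (A : algType K)
    (phi : {poly K}) (r s gamma : K) (u d h : A) : Prop :=
  downup_relations phi r s gamma u d h /\ pbw_basis u d h.

Definition Phi (K : fieldType) (phi : {poly K}) (r s gamma : K) (p : K * K)
  : K * K := (r * p.1 + gamma, s * p.2 + phi.[p.1]).

Definition weight (K : fieldType) (phi : {poly K}) (r s gamma lam : K) (i : nat)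
  : K * K := iter i (Phi phi r s gamma) (lam, 0).

Definition in_ideal (K : fieldType) (A : algType K) (S : A -> Prop) (a : A)
  : Prop :=
  exists (m : nat) (x y z : 'I_m -> A),
    (forall i, S (z i)) /\ a = \sum_(i < m) x i * z i * y i.

Definition bieval_K (K : fieldType) (N : nat) (c : nat -> nat -> K) (x y : K)
  : K := \sum_(i < N) \sum_(j < N) c i j * x ^+ i * y ^+ j.

(* f(h, ud) in L_0 (h and ud commute in L). *)
Definition bieval_A (K : fieldType) (A : algType K) (N : nat)
    (c : nat -> nat -> K) (x y : A) : A :=
  \sum_(i < N) \sum_(j < N) c i j *: (x ^+ i * y ^+ j).

Definition J_lambda (K : fieldType) (A : algType K)
    (phi : {poly K}) (r s gamma lam : K) (n : nat) (u d h : A) (a : A) : Prop :=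
  exists (N : nat) (c : nat -> nat -> K),
    a = bieval_A N c h (u * d) /\
    forall i, (i <= n)%N ->
      bieval_K N c (weight phi r s gamma lam i).1
                   (weight phi r s gamma lam i).2 = 0.

Definition ann_generators (K : fieldType) (A : algType K)
    (phi : {poly K}) (r s gamma lam : K) (n : nat) (u d h : A) (a : A) : Prop :=
  a = u ^+ n.+1 \/ a = d ^+ n.+1 \/ J_lambda phi r s gamma lam n u d h a.

(* Matrices of u, d, h on F_hw(lambda) w.r.t. basis v_0..v_n (column vectors):
   u v_j = v_{j+1}, d v_j = beta_j v_{j-1}, h v_j = lambda_j v_j. *)
Definition Umx (K : fieldType) (n : nat) : 'M[K]_(n.+1) :=
  \matrix_(i, j) (if (i : nat) == j.+1 then 1 else 0).
Definition Dmx (K : fieldType) (phi : {poly K}) (r s gamma lam : K) (n : nat)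
  : 'M[K]_(n.+1) :=
  \matrix_(i, j) (if (j : nat) == i.+1 then (weight phi r s gamma lam j).2
                  else 0).
Definition Hmx (K : fieldType) (phi : {poly K}) (r s gamma lam : K) (n : nat)
  : 'M[K]_(n.+1) :=
  \matrix_(i, j) (if i == j then (weight phi r s gamma lam i).1 else 0).

From HB Require Import structures.
From mathcomp Require Import all_boot all_order all_algebra.
Set Implicit Arguments. Unset Strict Implicit. Unset Printing Implicit Defensive.
Import Order.TTheory GRing.Theory Num.Theory.
Local Open Scope ring_scope.

(* The subalgebra L_0 = C[h, ud] acts diagonally on F_hw(lambda), with h and
   ud acting on v_i by lambda_i and beta_i; hence L_0 meets the annihilator
   exactly in J_lambda, while u^(n+1) and d^(n+1) act by 0.  Conversely,
   P = prod_(j=1..n) (1 - beta_j^-1 ud) acts as the projection onto v_0, so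
   the elements u^p P d^q (p, q <= n) act as nonzero multiples of the matrix
   units E_pq.  Modulo I = <u^(n+1), d^(n+1), J_lambda> every PBW monomial is
   a linear combination of them: 1 is congruent to sum_p pi_p^-1 u^p P d^p,
   where pi_p = beta_1 ... beta_p; this sum lies in L_0 because r, s != 0
   let u be moved across L_0.  Multiplying u^p P d^q on the left by u, h or
   d gives, modulo I, a multiple of another such element, since an element
   of L_0 standing next to P may be replaced by the scalar by which it acts
   on v_0.  As the E_pq are linearly independent, an element of the
   annihilator is congruent to 0 modulo I. *)

Section InIdeal.
Variables (K : fieldType) (A : algType K) (S : A -> Prop).
Local Notation I := (in_ideal S).

Lemma in_ideal0 : I 0.
Proof.
by exists 0%N, (fun _ => 0), (fun _ => 0), (fun _ => 0); split=> [[]|]; rewrite ?big_ord0.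
Qed.

Lemma in_idealD a b : I a -> I b -> I (a + b).
Proof.
move=> [m1 [x1 [y1 [z1 [Sz1 ->]]]]] [m2 [x2 [y2 [z2 [Sz2 ->]]]]].
pose join (f1 f2 : _ -> A) (i : 'I_(m1 + m2)) :=
  match split i with inl j => f1 j | inr j => f2 j end.
exists (m1 + m2)%N, (join x1 x2), (join y1 y2), (join z1 z2); split.
  by move=> i; rewrite /join; case: (split i).
by rewrite big_split_ord /join; congr (_ + _); apply: eq_bigr => i _;
  [rewrite (unsplitK (inl _ i)) | rewrite (unsplitK (inr _ i))].
Qed.

Lemma in_idealMl x a : I a -> I (x * a).
Proof.
move=> [m [x1 [y1 [z1 [Sz1 ->]]]]]; exists m, (fun i => x * x1 i), y1, z1.
by split=> //; rewrite mulr_sumr; apply: eq_bigr => i _; rewrite !mulrA.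
Qed.

Lemma in_idealMr x a : I a -> I (a * x).
Proof.
move=> [m [x1 [y1 [z1 [Sz1 ->]]]]]; exists m, x1, (fun i => y1 i * x), z1.
by split=> //; rewrite mulr_suml; apply: eq_bigr => i _; rewrite !mulrA.
Qed.

Lemma in_idealZ (c : K) a : I a -> I (c *: a).
Proof. by move=> Ia; rewrite -[a]mul1r scalerAl; apply: in_idealMl. Qed.

Lemma in_idealB a b : I a -> I b -> I (a - b).
Proof. by move=> Ia Ib; apply: in_idealD => //; rewrite -scaleN1r; apply: in_idealZ. Qed.

Lemma in_ideal_gen z : S z -> I z.
Proof.
move=> Sz; exists 1%N, (fun _ => 1), (fun _ => 1), (fun _ => z).
by rewrite big_ord1 mul1r mulr1.
Qed.

End InIdeal.

Section DiagMatrices.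
Variable R : pzSemiRingType.

Lemma diag_mxM m (a b : 'rV[R]_m) :
  diag_mx a *m diag_mx b = diag_mx (\row_i (a 0 i * b 0 i)).
Proof. by apply/matrixP => i j; rewrite mul_diag_mx !mxE mulrnAr. Qed.

Lemma diag_mxX m (a : 'rV[R]_m.+1) k :
  diag_mx a ^+ k = diag_mx (\row_i (a 0 i ^+ k)).
Proof.
elim: k => [|k IH]; first by rewrite expr0; apply/matrixP => i j; rewrite !mxE.
rewrite exprS IH -mulmxE diag_mxM; congr diag_mx.
by apply/rowP => i; rewrite !mxE exprS.
Qed.

Lemma diag_mx_delta00 m (a : 'rV[R]_m.+1) :
  diag_mx a *m delta_mx 0 0 = a 0 0 *: delta_mx 0 0 :> 'M[R]_m.+1.
Proof.
by apply/matrixP => i j; rewrite mul_diag_mx !mxE; case: eqP => [->|_]; rewrite ?mulr0.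
Qed.

Lemma mul_delta00 m (M N : 'M[R]_m.+1) :
  M *m delta_mx 0 0 *m N = \matrix_(i, j) (M i 0 * N 0 j).
Proof.
rewrite -(mul_delta_mx (0 : 'I_1)) mulmxA -colE -mulmxA -rowE.
by apply/matrixP => i j; rewrite !mxE big_ord1 !mxE.
Qed.

End DiagMatrices.

Section WeightMatrices.
Variables (K : fieldType) (phi : {poly K}) (r s gamma lam : K) (n : nat).
Local Notation lm i := (weight phi r s gamma lam i).1.
Local Notation bt i := (weight phi r s gamma lam i).2.
Local Notation U := (Umx K n).
Local Notation D := (Dmx phi r s gamma lam n).
Local Notation H := (Hmx phi r s gamma lam n).

Definition beta_prod (a q : nat) := \prod_(k < q) bt (a + k).+1.

Lemma Umx_pow p (a b : 'I_n.+1) :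
  (U ^+ p) a b = if (a : nat) == (b + p)%N then 1 else 0.
Proof.
elim: p a b => [|p IH] a b; first by rewrite expr0 !mxE addn0 -val_eqE; case: (_ == _).
rewrite exprSr -mulmxE mxE.
have [ltb1n | lenb] := ltnP b.+1 n.+1.
  rewrite (bigD1 (Ordinal ltb1n)) //= big1 ?addr0 => [|l /negbTE nlb].
    by rewrite mxE /= eqxx mulr1 IH addnS.
  by rewrite mxE -val_eqE /= in nlb *; rewrite nlb mulr0.
rewrite big1 => [|l _]; last first.
  rewrite mxE; case: eqP => [el|_]; last by rewrite mulr0.
  by have := ltn_ord l; rewrite el ltnNge lenb.
case: eqP => // ea; have := ltn_ord a; rewrite ea addnS ltnS.
by move/(leq_ltn_trans (leq_addr p b)); rewrite ltnNge -ltnS lenb.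
Qed.

Lemma Dmx_pow q (a b : 'I_n.+1) :
  (D ^+ q) a b = if (b : nat) == (a + q)%N then beta_prod a q else 0.
Proof.
elim: q a b => [|q IH] a b.
  by rewrite expr0 !mxE addn0 /beta_prod big_ord0 eq_sym -val_eqE; case: (_ == _).
rewrite exprS -mulmxE mxE.
have [lta1n | lena] := ltnP a.+1 n.+1.
  rewrite (bigD1 (Ordinal lta1n)) //= big1 ?addr0 => [|l /negbTE nla].
    rewrite mxE IH /= eqxx addSn addnS; case: eqP => _; rewrite ?mulr0 //.
    rewrite /beta_prod big_ord_recl addn0; congr (_ * _).
    by apply: eq_bigr => k _; rewrite addSnnS.
  by rewrite mxE -val_eqE /= in nla *; rewrite nla mul0r.
rewrite big1 => [|l _]; last first.
  rewrite mxE; case: eqP => [el|_]; last by rewrite mul0r.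
  by have := ltn_ord l; rewrite el ltnNge lena.
case: eqP => // eb; have := ltn_ord b; rewrite eb addnS ltnS.
by move/(leq_ltn_trans (leq_addr q a)); rewrite ltnNge -ltnS lena.
Qed.

Lemma Umx_nilpotent : U ^+ n.+1 = 0.
Proof.
apply/matrixP => a b; rewrite Umx_pow mxE; case: eqP => // ea.
by have := ltn_ord a; rewrite ea addnS ltnS ltnNge leq_addl.
Qed.

Lemma Dmx_nilpotent : D ^+ n.+1 = 0.
Proof.
apply/matrixP => a b; rewrite Dmx_pow mxE; case: eqP => // eb.
by have := ltn_ord b; rewrite eb addnS ltnS ltnNge leq_addl.
Qed.

Lemma Hmx_diag : H = diag_mx (\row_i lm i).
Proof. by apply/matrixP => i j; rewrite !mxE; case: eqP => [->|]. Qed.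

(* The first row of [U * D] vanishes, matching [bt 0 = 0]. *)
Lemma UDmx_diag : U * D = diag_mx (\row_i bt i).
Proof.
apply/matrixP => i j; rewrite -mulmxE !mxE.
have [i0 | i_gt0] := posnP i.
  rewrite big1 => [|l _]; last by rewrite mxE i0 mul0r.
  by rewrite (_ : i = ord0) ?mul0rn //; apply: val_inj.
have ltin : (i.-1 < n.+1)%N by rewrite (leq_ltn_trans (leq_pred i)).
rewrite (bigD1 (Ordinal ltin)) //= big1 ?addr0 => [|l /negbTE nli]; last first.
  rewrite mxE; case: eqP => [ei|_]; last by rewrite mul0r.
  by move: nli; rewrite -val_eqE /= ei /= eqxx.
rewrite !mxE /= prednK // eqxx mul1r eq_sym -val_eqE.
by case: eqP => [<-|].
Qed.

End WeightMatrices.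

Section AlgClosed.
Variables (K : fieldType) (A : algType K).

Definition alg_closed (P : A -> Prop) :=
  [/\ P 1, (forall a b, P a -> P b -> P (a + b)),
       (forall (k : K) a, P a -> P (k *: a)) & (forall a b, P a -> P b -> P (a * b))].

Lemma alg_closedX P x k : alg_closed P -> P x -> P (x ^+ k).
Proof. by case=> P1 _ _ PM Px; elim: k => [|k IH]; rewrite ?exprS; auto. Qed.

Lemma alg_closed0 P : alg_closed P -> P 0.
Proof. by case=> P1 _ PZ _; rewrite -(scale0r 1); apply: PZ. Qed.

End AlgClosed.

Section DownUp.
Variables (K : fieldType) (A : algType K) (phi : {poly K}) (r s gamma : K).
Variables (u d h : A).
Hypothesis Hhu : h * u - r *: (u * h) = gamma *: u.
Hypothesis Hdh : d * h - r *: (h * d) = gamma *: d.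
Hypothesis Hdu : d * u - s *: (u * d) = peval phi h.

Definition in_L0 (z : A) := exists N c, z = bieval_A N c h (u * d).

Lemma bieval_A_widen N M (c : nat -> nat -> K) (x y : A) : (N <= M)%N ->
  bieval_A M (fun i j => if (i < N)%N && (j < N)%N then c i j else 0) x y
  = bieval_A N c x y.
Proof.
move=> leNM; rewrite /bieval_A.
rewrite [RHS](big_ord_widen M (fun i => \sum_(j < N) c i j *: (x ^+ i * y ^+ j))) //.
rewrite [RHS]big_mkcond; apply: eq_bigr => i _; case: (i < N)%N => /=; last first.
  by rewrite big1 // => j _; rewrite scale0r.
rewrite [RHS](big_ord_widen M (fun j => c i j *: (x ^+ i * y ^+ j))) //.
rewrite [RHS]big_mkcond.
by apply: eq_bigr => j _; case: (j < N)%N; rewrite ?scale0r.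
Qed.

Lemma in_L0D a b : in_L0 a -> in_L0 b -> in_L0 (a + b).
Proof.
move=> [N1 [c1 ->]] [N2 [c2 ->]].
exists (N1 + N2)%N, (fun i j => (if (i < N1)%N && (j < N1)%N then c1 i j else 0)
   + (if (i < N2)%N && (j < N2)%N then c2 i j else 0)).
rewrite -(@bieval_A_widen N1 (N1 + N2)) ?leq_addr //.
rewrite -(@bieval_A_widen N2 (N1 + N2)) ?leq_addl //.
rewrite /bieval_A -big_split; apply: eq_bigr => i _; rewrite -big_split.
by apply: eq_bigr => j _; rewrite scalerDl.
Qed.

Lemma in_L0Z (k : K) a : in_L0 a -> in_L0 (k *: a).
Proof.
move=> [N [c ->]]; exists N, (fun i j => k * c i j).
rewrite /bieval_A scaler_sumr; apply: eq_bigr => i _; rewrite scaler_sumr.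
by apply: eq_bigr => j _; rewrite scalerA.
Qed.

Lemma in_L0_sum m (F : 'I_m -> A) :
  (forall i, in_L0 (F i)) -> in_L0 (\sum_(i < m) F i).
Proof.
move=> L0F; apply: big_ind => //; last exact: in_L0D.
by exists 0%N, (fun _ _ => 0); rewrite /bieval_A big_ord0.
Qed.

Lemma in_L0_monomial a b : in_L0 (h ^+ a * (u * d) ^+ b).
Proof.
have ltaN : (a < (a + b).+1)%N by rewrite ltnS leq_addr.
have ltbN : (b < (a + b).+1)%N by rewrite ltnS leq_addl.
exists (a + b).+1, (fun i j => ((i == a) && (j == b))%:R).
rewrite /bieval_A (bigD1 (Ordinal ltaN)) //= (bigD1 (Ordinal ltbN)) //=.
rewrite !eqxx scale1r big1 ?addr0; last first.
  by move=> j; rewrite -val_eqE => /negbTE /= njb; rewrite njb scale0r.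
rewrite big1 ?addr0 // => i; rewrite -val_eqE => /negbTE /= nia.
by rewrite big1 // => j _; rewrite nia scale0r.
Qed.

Lemma commr_h_ud : GRing.comm h (u * d).
Proof.
have hu_E : h * u = r *: (u * h) + gamma *: u by rewrite -Hhu addrC subrK.
have dh_E : d * h = r *: (h * d) + gamma *: d by rewrite -Hdh addrC subrK.
rewrite /GRing.comm mulrA hu_E -mulrA dh_E mulrDl mulrDr.
by rewrite -!scalerAl -!scalerAr !mulrA.
Qed.

Lemma in_L0M a b : in_L0 a -> in_L0 b -> in_L0 (a * b).
Proof.
move=> [N1 [c1 ->]] [N2 [c2 ->]]; rewrite /bieval_A mulr_suml.
apply: in_L0_sum => i; rewrite mulr_suml; apply: in_L0_sum => j; rewrite mulr_sumr.
apply: in_L0_sum => k; rewrite mulr_sumr; apply: in_L0_sum => l.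
rewrite -scalerAl -scalerAr scalerA; apply: in_L0Z.
have comm_hk : GRing.comm ((u * d) ^+ j) (h ^+ k).
  by apply/commrX/commr_sym/commrX/commr_h_ud.
rewrite mulrA -(mulrA (h ^+ i)) comm_hk !mulrA -exprD -mulrA -exprD.
exact: in_L0_monomial.
Qed.

Lemma in_L01 : in_L0 1.
Proof. by have := in_L0_monomial 0 0; rewrite !expr0 mulr1. Qed.
Lemma in_L0h : in_L0 h.
Proof. by have := in_L0_monomial 1 0; rewrite expr0 expr1 mulr1. Qed.
Lemma in_L0ud : in_L0 (u * d).
Proof. by have := in_L0_monomial 0 1; rewrite expr0 expr1 mul1r. Qed.

Lemma alg_closed_peval P : alg_closed P -> P h -> P (peval phi h).
Proof.
move=> clP Ph; have [_ PD PZ _] := clP.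
apply: big_ind => [||i _]; [exact: alg_closed0 | exact: PD |].
by apply: PZ; apply: alg_closedX.
Qed.

Lemma in_L0_ind P : alg_closed P -> P h -> P (u * d) -> forall z, in_L0 z -> P z.
Proof.
move=> clP Ph Pud z [N [c ->]]; have [_ PD PZ PM] := clP.
apply: big_ind => [||i _]; [exact: alg_closed0 | exact: PD |].
apply: big_ind => [||j _]; [exact: alg_closed0 | exact: PD |].
by apply/PZ/PM; apply: alg_closedX.
Qed.

Lemma in_L0_alg_closed : alg_closed in_L0.
Proof. split; [exact: in_L01 | exact: in_L0D | exact: in_L0Z | exact: in_L0M]. Qed.

Lemma in_L0_peval : in_L0 (peval phi h).
Proof. exact: alg_closed_peval in_L0_alg_closed in_L0h. Qed.

Definition L0_shiftr (x z : A) := exists2 z', in_L0 z' & z * x = x * z'.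
Definition L0_shiftl (x z : A) := exists2 z', in_L0 z' & x * z = z' * x.

Lemma L0_shiftr_alg_closed x : alg_closed (L0_shiftr x).
Proof.
split.
- by exists 1; [exact: in_L01 | rewrite mul1r mulr1].
- move=> a b [a' La ea] [b' Lb eb]; exists (a' + b'); first exact: in_L0D.
  by rewrite mulrDl mulrDr ea eb.
- move=> k a [a' La ea]; exists (k *: a'); first exact: in_L0Z.
  by rewrite -scalerAl ea scalerAr.
- move=> a b [a' La ea] [b' Lb eb]; exists (a' * b'); first exact: in_L0M.
  by rewrite -mulrA eb mulrA ea mulrA.
Qed.

Lemma L0_shiftl_alg_closed x : alg_closed (L0_shiftl x).
Proof.
split.
- by exists 1; [exact: in_L01 | rewrite mul1r mulr1].
- move=> a b [a' La ea] [b' Lb eb]; exists (a' + b'); first exact: in_L0D.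
  by rewrite mulrDl mulrDr ea eb.
- move=> k a [a' La ea]; exists (k *: a'); first exact: in_L0Z.
  by rewrite -scalerAr ea scalerAl.
- move=> a b [a' La ea] [b' Lb eb]; exists (a' * b'); first exact: in_L0M.
  by rewrite mulrA ea -mulrA eb mulrA.
Qed.

Lemma du_E : d * u = s *: (u * d) + peval phi h.
Proof. by rewrite -Hdu addrC subrK. Qed.

Lemma in_L0du : in_L0 (d * u).
Proof.
by rewrite du_E; apply: in_L0D; [apply/in_L0Z/in_L0ud | apply: in_L0_peval].
Qed.

Lemma L0_shiftr_u z : in_L0 z -> L0_shiftr u z.
Proof.
apply: in_L0_ind; first exact: L0_shiftr_alg_closed.
- exists (r *: h + gamma *: 1).
    by apply: in_L0D; apply: in_L0Z; [exact: in_L0h | exact: in_L01].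
  by rewrite mulrDr -!scalerAr mulr1 -Hhu addrC subrK.
- by exists (d * u); [exact: in_L0du | rewrite mulrA].
Qed.

Lemma L0_shiftr_uX p z : in_L0 z -> L0_shiftr (u ^+ p) z.
Proof.
elim: p z => [|p IH] z Lz; first by exists z; rewrite ?expr0 ?mulr1 ?mul1r.
have [z1 L1 e1] := L0_shiftr_u Lz; have [z2 L2 e2] := IH _ L1.
by exists z2 => //; rewrite exprS mulrA e1 -mulrA e2 mulrA.
Qed.

Lemma in_L0_dXuX p : in_L0 (d ^+ p * u ^+ p).
Proof.
elim: p => [|p IH]; first by rewrite !expr0 mulr1; exact: in_L01.
have [w Lw ew] := L0_shiftr_uX p in_L0du.
by rewrite exprSr exprS mulrA -(mulrA _ d u) -mulrA ew mulrA; apply: in_L0M.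
Qed.

Hypotheses (hr : r != 0) (hs : s != 0).

(* Moving [u] to the right inverts the twist [h |-> r h + gamma],
   [u d |-> s u d + phi(h)] of [L0_shiftr_u], hence needs [r, s != 0]. *)
Lemma L0_shiftl_u z : in_L0 z -> L0_shiftl u z.
Proof.
have clS := L0_shiftl_alg_closed u.
have Sh : L0_shiftl u h.
  exists (r^-1 *: (h - gamma *: 1)).
    apply/in_L0Z/in_L0D; first exact: in_L0h.
    by rewrite -scaleN1r; apply/in_L0Z/in_L0Z/in_L01.
  rewrite -scalerAl mulrBl -scalerAl mul1r -Hhu opprB addrC subrK.
  by rewrite scalerA mulVf // scale1r.
apply: in_L0_ind => //.
have [w Lw ew] := alg_closed_peval clS Sh.
exists (s^-1 *: (u * d - w)).
  by apply/in_L0Z/in_L0D; [exact: in_L0ud | rewrite -scaleN1r; apply: in_L0Z].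
rewrite -scalerAl mulrBl -ew -mulrA du_E mulrDr -scalerAr addrK.
by rewrite scalerA mulVf // scale1r mulrA.
Qed.

Lemma in_L0_uXdX p z : in_L0 z -> in_L0 (u ^+ p * z * d ^+ p).
Proof.
elim: p z => [|p IH] z Lz; first by rewrite !expr0 mulr1 mul1r.
have [z1 L1 e1] := L0_shiftl_u Lz.
rewrite exprSr exprS -!mulrA (mulrA u z) e1 !mulrA.
rewrite -(mulrA _ u d) -(mulrA _ z1).
by apply/IH/in_L0M => //; exact: in_L0ud.
Qed.

Variables (lam : K) (n : nat).
Local Notation lm i := (weight phi r s gamma lam i).1.
Local Notation bt i := (weight phi r s gamma lam i).2.
Local Notation pi q := (beta_prod phi r s gamma lam 0 q).
Hypothesis hbeta : forall i, (1 <= i <= n)%N -> bt i != 0.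

Variable rho : A -> 'M[K]_n.+1.
Hypothesis rho_add : forall a b, rho (a + b) = rho a + rho b.
Hypothesis rho_scale : forall (c : K) a, rho (c *: a) = c *: rho a.
Hypothesis rho_mul : forall a b, rho (a * b) = rho a * rho b.
Hypothesis rho_one : rho 1 = 1.
Hypothesis rho_u : rho u = Umx K n.
Hypothesis rho_d : rho d = Dmx phi r s gamma lam n.
Hypothesis rho_h : rho h = Hmx phi r s gamma lam n.

Local Notation I := (in_ideal (ann_generators phi r s gamma lam n u d h)).

Lemma rho0 : rho 0 = 0.
Proof. by rewrite -(scale0r 0) rho_scale scale0r. Qed.

Lemma rho_sum m (F : 'I_m -> A) :
  rho (\sum_(i < m) F i) = \sum_(i < m) rho (F i).
Proof. exact: (big_morph rho rho_add rho0). Qed.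

Lemma rhoB a b : rho (a - b) = rho a - rho b.
Proof. by rewrite rho_add -scaleN1r rho_scale scaleN1r. Qed.

Lemma rhoX x k : rho (x ^+ k) = rho x ^+ k.
Proof. by elim: k => [|k IH]; rewrite ?expr0 ?rho_one // !exprS rho_mul IH. Qed.

Lemma rho_ud : rho (u * d) = diag_mx (\row_i bt i).
Proof. by rewrite rho_mul rho_u rho_d UDmx_diag. Qed.

Lemma rho_bieval N c :
  rho (bieval_A N c h (u * d)) = diag_mx (\row_i bieval_K N c (lm i) (bt i)).
Proof.
rewrite /bieval_A rho_sum /bieval_K.
transitivity (\sum_(a < N) \sum_(b < N)
    diag_mx (\row_(i < n.+1) (c a b * lm i ^+ a * bt i ^+ b))).
  apply: eq_bigr => a _; rewrite rho_sum; apply: eq_bigr => b _.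
  rewrite rho_scale rho_mul !rhoX rho_h Hmx_diag rho_ud !diag_mxX -mulmxE.
  rewrite diag_mxM -linearZ /=; congr diag_mx.
  by apply/rowP => i; rewrite !mxE mulrA.
under eq_bigr do rewrite -raddf_sum.
rewrite -raddf_sum; congr diag_mx; apply/rowP => i; rewrite summxE mxE.
by apply: eq_bigr => a _; rewrite summxE; apply: eq_bigr => b _; rewrite mxE.
Qed.

Lemma in_L0_diag z : in_L0 z -> exists f, rho z = diag_mx f.
Proof. by move=> [N [c ->]]; eexists; apply: rho_bieval. Qed.

Lemma ideal_rho0 a : I a -> rho a = 0.
Proof.
move=> [m [x [y [z [Gz ->]]]]]; rewrite rho_sum big1 // => i _.
rewrite !rho_mul; suff -> : rho (z i) = 0 by rewrite mulr0 mul0r.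
case: (Gz i) => [-> | [-> | [N [c [-> Jc]]]]].
- by rewrite rhoX rho_u Umx_nilpotent.
- by rewrite rhoX rho_d Dmx_nilpotent.
rewrite rho_bieval (_ : \row_i _ = 0) ?linear0 //.
by apply/rowP => j; rewrite !mxE; apply: Jc; rewrite -ltnS.
Qed.

Lemma in_L0_ker_ideal z : in_L0 z -> rho z = 0 -> I z.
Proof.
move=> [N [c ->]] rz; apply: in_ideal_gen; right; right.
exists N, c; split=> // i le_in.
have /matrixP/(_ (inord i) (inord i)) := rz.
by rewrite rho_bieval !mxE eqxx mulr1n inordK.
Qed.

Lemma in_idealXu k : (n < k)%N -> I (u ^+ k).
Proof. by move/subnK <-; rewrite exprD; apply/in_idealMl/in_ideal_gen; left. Qed.

Lemma in_idealXd k : (n < k)%N -> I (d ^+ k).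
Proof.
by move/subnK <-; rewrite exprD; apply/in_idealMl/in_ideal_gen; right; left.
Qed.

Lemma rho_prod_diag m (F : 'I_m -> A) (f : 'I_m -> 'rV_n.+1) :
  (forall j, rho (F j) = diag_mx (f j)) ->
  rho (\prod_(j < m) F j) = diag_mx (\row_i \prod_(j < m) f j 0 i).
Proof.
elim: m F f => [|m IH] F f rhoF.
  by rewrite big_ord0 rho_one; apply/matrixP => i j; rewrite !mxE big_ord0.
rewrite big_ord_recr rho_mul (IH _ (fun j => f (widen_ord (leqnSn m) j))) //.
rewrite rhoF -mulmxE diag_mxM; congr diag_mx.
by apply/rowP => i; rewrite !mxE big_ord_recr.
Qed.

(* Acts as the projection onto [v_0]: the factor [j] kills [v_(j+1)]. *)
Definition proj0 : A := \prod_(j < n) (1 - (bt j.+1)^-1 *: (u * d)).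

Lemma in_L0_proj0 : in_L0 proj0.
Proof.
have [L01 L0D L0Z L0M] := in_L0_alg_closed.
apply: big_ind => [||j _]; [exact: L01 | exact: L0M |].
by apply: L0D => //; rewrite -scaleN1r; apply/L0Z/L0Z/in_L0ud.
Qed.

Lemma rho_proj0 : rho proj0 = delta_mx 0 0.
Proof.
rewrite (@rho_prod_diag _ _ (fun j => \row_i (1 - (bt j.+1)^-1 * bt i))); last first.
  move=> j; rewrite rhoB rho_one rho_scale rho_ud.
  by apply/matrixP => i k; rewrite !mxE; case: (i == k); rewrite ?mulr0 ?subr0.
have prod_E (i : 'I_n.+1) :
    \prod_(j < n) (1 - (bt j.+1)^-1 * bt i) = (i == 0 :> 'I_n.+1)%:R.
  have [i0 | i_gt0] := posnP i.
    rewrite big1 => [|j _]; last by rewrite i0 mulr0 subr0.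
    by rewrite (_ : i = 0) ?eqxx //; apply: val_inj.
  have lt_i1n : (i.-1 < n)%N by rewrite -ltnS prednK.
  rewrite (bigD1 (Ordinal lt_i1n)) // -[(Ordinal lt_i1n : nat).+1]/(i.-1.+1).
  rewrite prednK //= mulVf ?subrr ?mul0r //.
    suff /negbTE -> : i != 0 :> 'I_n.+1 by [].
    by rewrite -val_eqE /= -lt0n.
  by apply: hbeta; rewrite i_gt0 -ltnS ltn_ord.
apply/matrixP => i k; rewrite !mxE; under eq_bigr do rewrite mxE; rewrite prod_E.
have [<-|nik] := eqVneq i k; first by rewrite andbb.
case: eqP => // i0; rewrite mulr0n.
by case: eqP => // k0; case/eqP: nik; rewrite i0 k0.
Qed.

Lemma beta_prod_neq0 q : (q <= n)%N -> pi q != 0.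
Proof.
move=> le_qn; apply/prodf_neq0 => k _; apply: hbeta.
by rewrite add0n /= (leq_trans _ le_qn).
Qed.

Definition munit (p q : nat) : A := u ^+ p * proj0 * d ^+ q.

Lemma rho_munit (p q : 'I_n.+1) : rho (munit p q) = pi q *: delta_mx p q.
Proof.
rewrite !rho_mul !rhoX rho_proj0 rho_u rho_d -!mulmxE mul_delta00.
apply/matrixP => a b; rewrite !mxE Umx_pow Dmx_pow !add0n -!val_eqE /=.
by case: eqP => _; case: eqP => _; rewrite ?mulr1 ?mul1r ?mulr0 ?mul0r.
Qed.

Definition unit_comb (c : nat -> nat -> K) : A :=
  \sum_(p < n.+1) \sum_(q < n.+1) c p q *: munit p q.

Lemma rho_unit_comb c : rho (unit_comb c) = \matrix_(p, q) (c p q * pi q).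
Proof.
rewrite [RHS]matrix_sum_delta rho_sum; apply: eq_bigr => p _.
rewrite rho_sum; apply: eq_bigr => q _.
by rewrite rho_scale rho_munit scalerA mxE.
Qed.

Definition reducible (a : A) := exists c, I (a - unit_comb c).

Lemma reducible_ideal a : I a -> reducible a.
Proof.
move=> Ia; exists (fun _ _ => 0).
by rewrite /unit_comb big1 ?subr0 // => p _; rewrite big1 // => q _; rewrite scale0r.
Qed.

Lemma reducibleD a b : reducible a -> reducible b -> reducible (a + b).
Proof.
move=> [c1 Ic1] [c2 Ic2]; exists (fun p q => c1 p q + c2 p q).
suff -> : unit_comb (fun p q => c1 p q + c2 p q) = unit_comb c1 + unit_comb c2.
  by rewrite opprD addrACA; apply: in_idealD.
rewrite /unit_comb -big_split; apply: eq_bigr => p _.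
by rewrite -big_split; apply: eq_bigr => q _; rewrite scalerDl.
Qed.

Lemma reducibleZ (k : K) a : reducible a -> reducible (k *: a).
Proof.
move=> [c Ic]; exists (fun p q => k * c p q).
suff -> : unit_comb (fun p q => k * c p q) = k *: unit_comb c.
  by rewrite -scalerBr; apply: in_idealZ.
rewrite /unit_comb scaler_sumr; apply: eq_bigr => p _.
by rewrite scaler_sumr; apply: eq_bigr => q _; rewrite scalerA.
Qed.

Lemma reducible_sum m (F : 'I_m -> A) :
  (forall i, reducible (F i)) -> reducible (\sum_(i < m) F i).
Proof.
move=> RF; apply: big_ind => //; last exact: reducibleD.
exact/reducible_ideal/in_ideal0.
Qed.

Lemma reducible_munit p q : (p <= n)%N -> (q <= n)%N -> reducible (munit p q).
Proof.
rewrite -[(p <= n)%N]ltnS -[(q <= n)%N]ltnS => lt_pn lt_qn.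
exists (fun p' q' => ((p' == p) && (q' == q))%:R).
rewrite /unit_comb (bigD1 (Ordinal lt_pn)) //= (bigD1 (Ordinal lt_qn)) //=.
rewrite !eqxx scale1r big1 ?addr0 => [|q' /negbTE nqq]; last first.
  by rewrite -val_eqE /= in nqq; rewrite nqq scale0r.
rewrite big1 ?addr0 => [|p' /negbTE npp]; last first.
  by rewrite big1 // => q' _; rewrite -val_eqE /= in npp; rewrite npp scale0r.
by rewrite subrr; apply: in_ideal0.
Qed.

Lemma in_L0_mul_proj0 w : in_L0 w -> I (w * proj0 - rho w 0 0 *: proj0).
Proof.
move=> Lw; have [_ L0D L0Z L0M] := in_L0_alg_closed; have Lp := in_L0_proj0.
apply: in_L0_ker_ideal.
  by apply: L0D; [exact: L0M | rewrite -scaleN1r; exact/L0Z/L0Z].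
rewrite rhoB rho_mul rho_scale rho_proj0; have [f ->] := in_L0_diag Lw.
by rewrite -mulmxE diag_mx_delta00 mxE eqxx mulr1n subrr.
Qed.

Lemma reducible_uX_L0_proj0 p q w : in_L0 w -> (p <= n)%N -> (q <= n)%N ->
  reducible (u ^+ p * w * proj0 * d ^+ q).
Proof.
move=> Lw le_pn le_qn.
have -> : u ^+ p * w * proj0 * d ^+ q =
    u ^+ p * (w * proj0 - rho w 0 0 *: proj0) * d ^+ q + rho w 0 0 *: munit p q.
  by rewrite /munit mulrBr mulrBl -scalerAr -scalerAl subrK !mulrA.
apply: reducibleD; last exact/reducibleZ/reducible_munit.
exact/reducible_ideal/in_idealMr/in_idealMl/in_L0_mul_proj0.
Qed.

Lemma reducible_mull x a :
  (forall p q, (p <= n)%N -> (q <= n)%N -> reducible (x * munit p q)) ->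
  reducible a -> reducible (x * a).
Proof.
move=> Rx [c Ic].
have -> : x * a = x * (a - unit_comb c) + x * unit_comb c by rewrite -mulrDr subrK.
apply: reducibleD; first exact/reducible_ideal/in_idealMl.
rewrite mulr_sumr; apply: reducible_sum => p.
rewrite mulr_sumr; apply: reducible_sum => q.
by rewrite -scalerAr; apply/reducibleZ/Rx; rewrite -ltnS.
Qed.

Lemma reducible_mulXl x k a :
  (forall p q, (p <= n)%N -> (q <= n)%N -> reducible (x * munit p q)) ->
  reducible a -> reducible (x ^+ k * a).
Proof.
move=> Rx Ra; elim: k => [|k IH]; first by rewrite expr0 mul1r.
by rewrite exprS -mulrA; apply: reducible_mull.
Qed.

Lemma reducible_u_munit p q :
  (p <= n)%N -> (q <= n)%N -> reducible (u * munit p q).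
Proof.
move=> le_pn le_qn; rewrite /munit !mulrA -exprS.
have [lt_pn | le_np] := ltnP p n; first exact: reducible_munit.
by apply/reducible_ideal/in_idealMr/in_idealMr/in_idealXu; rewrite ltnS.
Qed.

Lemma reducible_h_munit p q :
  (p <= n)%N -> (q <= n)%N -> reducible (h * munit p q).
Proof.
move=> le_pn le_qn; have [z Lz ez] := L0_shiftr_uX p in_L0h.
by rewrite /munit !mulrA ez; apply: reducible_uX_L0_proj0.
Qed.

(* [d^n u^n] acts on [v_0] by [pi n], so modulo [I] the element [proj0] is a
   multiple of [d^n u^n proj0], which [d] sends into [I]. *)
Lemma in_ideal_d_proj0 : I (d * proj0).
Proof.
set w := d ^+ n * u ^+ n; have Lw : in_L0 w := in_L0_dXuX n.
have rho_w00 : rho w 0 0 = pi n.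
  rewrite rho_mul !rhoX rho_d rho_u -mulmxE mxE (bigD1 ord_max) //= big1 ?addr0.
    by rewrite Dmx_pow Umx_pow /= !add0n !eqxx mulr1.
  move=> l /negbTE nln; rewrite Dmx_pow add0n.
  by rewrite -val_eqE /= in nln; rewrite nln mul0r.
have -> : d * proj0 =
    (pi n)^-1 *: (d ^+ n.+1 * u ^+ n * proj0
                  - d * (w * proj0 - rho w 0 0 *: proj0)).
  rewrite rho_w00 mulrBr [d ^+ _ * _ * _](_ : _ = d * (w * proj0)).
    by rewrite subKr -scalerAr scalerA mulVf ?scale1r // beta_prod_neq0.
  by rewrite /w exprS !mulrA.
apply/in_idealZ/in_idealB; last exact/in_idealMl/in_L0_mul_proj0.
exact/in_idealMr/in_idealMr/in_idealXd.
Qed.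

Lemma reducible_d_munit p q :
  (p <= n)%N -> (q <= n)%N -> reducible (d * munit p q).
Proof.
move=> le_pn le_qn; case: p le_pn => [|p] le_pn.
  rewrite /munit expr0 mul1r mulrA.
  exact/reducible_ideal/in_idealMr/in_ideal_d_proj0.
have [z Lz ez] := L0_shiftr_uX p in_L0du.
rewrite /munit exprS !mulrA ez.
by apply: reducible_uX_L0_proj0 => //; exact: ltnW.
Qed.

Lemma reducible1 : reducible 1.
Proof.
pose c p q := (p == q)%:R * (pi p)^-1; exists c.
have [_ L0D L0Z _] := in_L0_alg_closed.
apply: in_L0_ker_ideal.
  apply: L0D; first exact: in_L01.
  rewrite -scaleN1r; apply/L0Z/in_L0_sum => p; apply: in_L0_sum => q.
  have [epq | npq] := eqVneq (p : nat) q.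
    by rewrite /munit -epq; exact/L0Z/in_L0_uXdX/in_L0_proj0.
  by rewrite /c (negbTE npq) mul0r scale0r; exact: alg_closed0 in_L0_alg_closed.
rewrite rhoB rho_one rho_unit_comb.
apply/matrixP => i j; rewrite !mxE /c -val_eqE.
have [<- | _] := eqVneq (i : nat) j; last by rewrite !mul0r subrr.
by rewrite mul1r mulVf ?subrr // beta_prod_neq0 // -ltnS.
Qed.

Hypothesis span : forall a : A, exists N (c : nat -> nat -> nat -> K),
  a = \sum_(i < N) \sum_(j < N) \sum_(k < N)
        c i j k *: (u ^+ i * h ^+ j * d ^+ k).

Lemma reducible_all a : reducible a.
Proof.
have [N [c ->]] := span a.
apply: reducible_sum => i; apply: reducible_sum => j; apply: reducible_sum => k.
apply: reducibleZ; rewrite -[_ * d ^+ k]mulr1 -!mulrA.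
apply: reducible_mulXl; first exact: reducible_u_munit.
apply: reducible_mulXl; first exact: reducible_h_munit.
by apply: reducible_mulXl; [exact: reducible_d_munit | exact: reducible1].
Qed.

Lemma rho_eq0_in_ideal a : rho a = 0 <-> I a.
Proof.
split=> [rho_a0 | /ideal_rho0 //].
have [c Ic] := reducible_all a.
suff c0 : unit_comb c = 0 by rewrite c0 subr0 in Ic.
have /matrixP rho_c0 : rho (unit_comb c) = 0.
  by rewrite -[unit_comb c](subKr a) rhoB rho_a0 ideal_rho0 // subrr.
rewrite /unit_comb big1 // => p _; rewrite big1 // => q _.
have /eqP := rho_c0 p q; rewrite rho_unit_comb !mxE mulf_eq0.
case/orP => [/eqP -> | ]; first by rewrite scale0r.
by rewrite (negbTE (beta_prod_neq0 _)) // -ltnS.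
Qed.

End DownUp.

Theorem mainTheorem1
    (K : numClosedFieldType) (A : algType K)
    (phi : {poly K}) (r s gamma : K) (u d h : A)
    (hr : r != 0) (hs : s != 0)
    (hL : is_downup_algebra phi r s gamma u d h)
    (lam : K) (n : nat)
    (hdist : forall i j, (i <= n)%N -> (j <= n)%N -> i <> j ->
        weight phi r s gamma lam i <> weight phi r s gamma lam j)
    (hbeta : forall i, (1 <= i <= n)%N -> (weight phi r s gamma lam i).2 != 0)
    (hbeta_end : (weight phi r s gamma lam n.+1).2 = 0)
    (rho : A -> 'M[K]_(n.+1))
    (rho_add : forall a b, rho (a + b) = rho a + rho b)
    (rho_scale : forall (c : K) a, rho (c *: a) = c *: rho a)
    (rho_mul : forall a b, rho (a * b) = rho a * rho b)
    (rho_one : rho 1 = 1)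
    (rho_u : rho u = Umx K n)
    (rho_d : rho d = Dmx phi r s gamma lam n)
    (rho_h : rho h = Hmx phi r s gamma lam n) :
  forall a : A,
    rho a = 0 <-> in_ideal (ann_generators phi r s gamma lam n u d h) a.
Proof.
have [[Hhu Hdh Hdu] [span _]] := hL.
exact: (rho_eq0_in_ideal Hhu Hdh Hdu hr hs hbeta rho_add rho_scale rho_mul rho_one
  rho_u rho_d rho_h span).
Qed.
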